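(* Let $r \ge 3$ and let $n$ be defined by $n=2$ if $r=3$, $n=\lfloor r/2\rfloor$ if $4\le r\le 7$, and $n=\lceil r/2\rceil-1$ if $r\ge 8$. Let $I_1\subseteq\mathbb{F}_3^r$ be the set of vectors with all entries in $\{0,1\}$ having exactly $k$ entries equal to $1$ for some $k\in[n,2n-1]$, and let $I_2=\{2x : x\in I_1\}$. Let $R\subseteq I_1$ be the fixed set of $r$ regular redundant indices chosen by the construction, which forms a basis of $\mathbb{F}_3^r$. The position set is $I=I_1\cup I_2\cup\{O,E\}$, where $O,E$ are two additional positions. A word $v=(v_i)_{i\in I}\in\mathbb{F}_3^{I}$ is an A2 codeword if \[\bigoplus_{i\in I_1\cup I_2} v_i\cdot i = 0\ \text{ in } \mathbb{F}_3^r,\qquad v_O+\sum_{i\in I_1} v_i\equiv 0 \pmod 3,\qquad v_E+\sum_{i\in I_2} v_i\equiv 0\pmod 3.\] The message positions are $M=(I_1\cup I_2)\setminus R$, and a message $X\in\mathbb{F}_3^{M}$ is encoded as the unique A2 codeword $X'$ whose restriction to $M$ equals $X$. Then for any two distinct messages $X\neq Y$, the codewords $X'$ and $Y'$ differ in at least $4$ positions.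
   Context: Index vectors are identified with $r$-trit ternary strings; $\oplus$ denotes componentwise addition modulo $3$ on $\mathbb{F}_3^r$ (the paper calls it ternary XOR), and $v_i\cdot i$ means the vector $i$ scaled by $v_i\in\mathbb{F}_3$. For example, with $r=4$, $n=2$, $R=\{0011,0110,0111,1110\}$ this gives the $[22,16,4]_3$ code. *)

From mathcomp Require Import all_boot all_algebra.
Set Implicit Arguments. Unset Strict Implicit. Unset Printing Implicit Defensive.
Import GRing.Theory.
Local Open Scope ring_scope.

Definition vec (r : nat) := 'rV['F_3]_r.

Definition nparam (r : nat) : nat :=
  if r == 3 then 2%N
  else if (r <= 7)%N then r./2
  else (uphalf r).-1.

Definition ones (r : nat) (x : vec r) : nat := #|[set j : 'I_r | x 0 j == 1]|.

Definition I1 (r : nat) : {set vec r} :=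
  [set x : vec r | [forall j : 'I_r, (x 0 j == 0) || (x 0 j == 1)]
                   && (nparam r <= ones x <= (nparam r).*2.-1)%N].

Definition I2 (r : nat) : {set vec r} := [set 2%:R *: x | x in I1 r].

Definition pos (r : nat) := option (option (vec r)).
Definition posV (r : nat) (x : vec r) : pos r := Some (Some x).
Definition posO (r : nat) : pos r := Some None.
Definition posE (r : nat) : pos r := None.

Definition Ipos (r : nat) : {set pos r} :=
  [set posV x | x in I1 r :|: I2 r] :|: [set posO r; posE r].

Definition word (r : nat) := {ffun pos r -> 'F_3}.

(* A2 codewords (only values on Ipos matter). *)
Definition A2_codeword (r : nat) (v : word r) : Prop :=
  [/\ \sum_(x in I1 r :|: I2 r) v (posV x) *: x = 0,
      v (posO r) + \sum_(x in I1 r) v (posV x) = 0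
    & v (posE r) + \sum_(x in I2 r) v (posV x) = 0].

Definition Mset (r : nat) (R : {set vec r}) : {set vec r} := (I1 r :|: I2 r) :\: R.

Definition dist (r : nat) (v w : word r) : nat := #|[set p in Ipos r | v p != w p]|.

(* The difference of two codewords is a codeword, so it suffices to show that
   an A2 codeword v that is nonzero somewhere on I1 ∪ I2 has weight at least 4.
   Split v into its I1 part together with the check symbol v_O, and its I2
   part together with v_E.  A part with nonempty support has weight at least
   2, since a single nonzero entry cannot be cancelled by its check symbol.
   If one part vanishes, the other satisfies Σ v_x x = 0 on its own.  The
   vectors of I1 (resp. I2) are distinct nonzero vectors whose nonzero
   entries all equal 1 (resp. 2); no one or two of them are dependent, and
   three of them are dependent only with coefficients of nonzero sum, which
   makes the check symbol nonzero.  So that part alone has weight at least 4. *)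

From mathcomp Require Import all_boot all_algebra.
Import GRing.Theory.
Local Open Scope ring_scope.
Set Implicit Arguments. Unset Strict Implicit.

Lemma big_setU_disjoint (R : Type) (idx : R) (op : Monoid.com_law idx)
    (T : finType) (A B : {set T}) (F : T -> R) :
  [disjoint A & B] ->
  \big[op/idx]_(i in A :|: B) F i =
    op (\big[op/idx]_(i in A) F i) (\big[op/idx]_(i in B) F i).
Proof. by move=> dAB; rewrite -bigU //; apply: eq_bigl => i; rewrite !inE. Qed.

Lemma card_setIdE (T : finType) (A : {set T}) (P : pred T) :
  #|[set x in A | P x]| = (\sum_(x in A) P x)%N.
Proof.
rewrite -sum1_card big_mkcond [RHS]big_mkcond; apply: eq_bigr => x _.
by rewrite inE; case: (x \in A); case: (P x).
Qed.

Lemma big_support (T : finType) (V U : nmodType) (A : {set T})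
    (w : T -> V) (F : T -> U) :
  (forall x, w x = 0 -> F x = 0) ->
  \sum_(x in A) F x = \sum_(x in [set x in A | w x != 0]) F x.
Proof.
move=> Fw0; rewrite big_mkcond [RHS]big_mkcond; apply: eq_bigr => x _.
by rewrite inE; case: (x \in A); case: eqP => // /Fw0.
Qed.

Definition flat (R : pzRingType) (n : nat) (e : R) (x : 'rV[R]_n) :=
  [forall j, (x 0 j == 0) || (x 0 j == e)].

Lemma flatP (R : pzRingType) n (e : R) (x : 'rV[R]_n) :
  reflect (forall j, x 0 j = 0 \/ x 0 j = e) (flat e x).
Proof.
apply: (iffP forallP) => [h j | h j].
  by case/orP: (h j) => /eqP; [left | right].
by case: (h j) => ->; rewrite eqxx ?orbT.
Qed.

Lemma flat_comb2_neq0 (R : idomainType) n (e wa wb : R) (a b : 'rV[R]_n) :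
  e != 0 -> flat e a -> flat e b -> a != b -> wa != 0 -> wb != 0 ->
  wa *: a + wb *: b != 0.
Proof.
move=> e0 /flatP fa /flatP fb + wa0 wb0; apply: contraNneq => /rowP comb0.
apply/eqP/rowP => j; move: (comb0 j); rewrite !mxE.
by case: (fa j) (fb j) => -> [] ->; rewrite ?mulr0 ?add0r ?addr0 // => /eqP;
  rewrite mulf_eq0 (negbTE e0) orbF ?(negbTE wa0) ?(negbTE wb0).
Qed.

Lemma F3_cases (x : 'F_3) : [\/ x = 0, x = 1 | x = 2%:R].
Proof.
by case: x => [[|[|[|m]]] lt_x3] //; [constructor 1 | constructor 2 | constructor 3];
  apply: val_inj.
Qed.

Lemma F3_sum3_eq0 (u v t : 'F_3) :
  u != 0 -> v != 0 -> t != 0 -> u + v + t = 0 -> u = v /\ v = t.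
Proof.
by case: (F3_cases u) => ->; case: (F3_cases v) => ->; case: (F3_cases t) => ->.
Qed.

(* The weights are equal, so the combination is a multiple of a + b + c,
   whose entry at a coordinate where b and c differ is e or 2e. *)
Lemma flat_comb3_neq0 n (e wa wb wc : 'F_3) (a b c : 'rV['F_3]_n) :
  e != 0 -> flat e a -> flat e b -> flat e c -> b != c ->
  wa != 0 -> wb != 0 -> wc != 0 -> wa + wb + wc = 0 ->
  wa *: a + wb *: b + wc *: c != 0.
Proof.
move=> e0 /flatP fa /flatP fb /flatP fc + wa0 wb0 wc0 /F3_sum3_eq0[] // <- <-.
rewrite -!scalerDr scaler_eq0 negb_or wa0 /=.
apply: contraNneq => /rowP sum0; apply/eqP/rowP => j; move: (sum0 j); rewrite !mxE.
by case: (fa j) (fb j) (fc j) => -> [] -> [] ->; case: (F3_cases e) e0 => ->.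
Qed.

Lemma flat_comb_neq0 n (e : 'F_3) (S : {set 'rV['F_3]_n})
    (w : 'rV['F_3]_n -> 'F_3) :
  e != 0 -> {in S, forall x, [&& flat e x, x != 0 & w x != 0]} ->
  (0 < #|S| <= 3)%N -> (#|S| = 3%N -> \sum_(x in S) w x = 0) ->
  \sum_(x in S) w x *: x != 0.
Proof.
move=> e0 flatS; rewrite -!big_enum cardE.
have: all (fun x => [&& flat e x, x != 0 & w x != 0]) (enum S).
  by apply/allP => x; rewrite mem_enum; apply: flatS.
move: (enum_uniq S); case: (enum S) => [|a [|b [|c []]]] //=.
all: rewrite !big_cons !big_nil.
- by move=> _ /andP[/and3P[_ a0 wa0] _] _ _; rewrite !addr0 scaler_eq0 negb_or wa0.
- rewrite inE andbT !addr0 => ab /and3P[/and3P[fa _ wa0] /and3P[fb _ wb0] _] _ _.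
  exact: flat_comb2_neq0 e0 fa fb ab wa0 wb0.
- rewrite !inE !andbT !addr0 !addrA => /andP[_ bc].
  move=> /and3P[/and3P[fa _ wa0] /and3P[fb _ wb0] /and3P[fc _ wc0]] _ /(_ erefl).
  exact: flat_comb3_neq0 e0 fa fb fc bc wa0 wb0 wc0.
Qed.

(* The weight of w restricted to A, extended by the check symbol - Σ_A w. *)
Definition parity_weight (T : finType) (V : nmodType) (A : {set T}) (w : T -> V) :=
  (#|[set x in A | w x != 0%R]| + ((\sum_(x in A) w x)%R != 0%R))%N.

Lemma parity_weight_ge2 (T : finType) (V : nmodType) (A : {set T}) (w : T -> V) :
  [set x in A | w x != 0] != set0 -> (2 <= parity_weight A w)%N.
Proof.
rewrite /parity_weight (big_support _ (w := w) (F := w)) //.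
set S := [set x in A | w x != 0]; rewrite -card_gt0.
have [/eqP/cards1P[a defS] _ | S_ne1 S_gt0] := eqVneq #|S| 1%N.
  have /setIdP[_ wa0] : a \in S by rewrite defS set11.
  by rewrite defS cards1 big_set1 wa0.
by apply: leq_trans (leq_addr _ _); rewrite ltn_neqAle eq_sym S_ne1.
Qed.

Lemma parity_weight_ge4 n (e : 'F_3) (A : {set 'rV['F_3]_n})
    (w : 'rV['F_3]_n -> 'F_3) :
  e != 0 -> {in A, forall x, flat e x && (x != 0)} ->
  [set x in A | w x != 0] != set0 -> \sum_(x in A) w x *: x = 0 ->
  (4 <= parity_weight A w)%N.
Proof.
move=> e0 flatA S_neq0 /eqP; apply: contraLR; rewrite /parity_weight -ltnNge.
rewrite (big_support _ (w := w) (F := w)) //.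
rewrite (big_support _ (w := w) (F := fun x => w x *: x)) => [|x ->]; last first.
  exact: scale0r.
set S := [set x in A | w x != 0] => small.
apply: flat_comb_neq0 e0 _ _ _.
- by move=> x /setIdP[/flatA/andP[-> ->] ->].
- by rewrite card_gt0 S_neq0 -ltnS (leq_ltn_trans (leq_addr _ _) small).
- by move=> S3; move: small; rewrite S3; case: eqP.
Qed.

Lemma nparam_gt0 r : (2 <= r)%N -> (0 < nparam r)%N.
Proof. by case: r => [|[|[|[|[|[|[|[|r]]]]]]]] // _; rewrite /nparam /= ?uphalfE. Qed.

Section A2Code.

Variable r : nat.
Hypothesis nparam_r_gt0 : (0 < nparam r)%N.

Lemma I1_flat x : x \in I1 r -> flat 1 x.
Proof. by case/setIdP. Qed.

Lemma I2_flat x : x \in I2 r -> flat 2%:R x.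
Proof.
case/imsetP=> y /I1_flat/flatP fy ->; apply/flatP => j.
by rewrite mxE; case: (fy j) => ->; [left; rewrite mulr0 | right; rewrite mulr1].
Qed.

Lemma I1_neq0 x : x \in I1 r -> x != 0.
Proof.
case/setIdP=> _; apply: contraTneq => ->.
suff -> : ones (0 : vec r) = 0%N by rewrite leqNgt nparam_r_gt0.
by apply/eqP; rewrite cards_eq0; apply/eqP/setP => j; rewrite !inE mxE eq_sym oner_eq0.
Qed.

Lemma I2_neq0 x : x \in I2 r -> x != 0.
Proof. by case/imsetP=> y /I1_neq0 y0 ->; rewrite scaler_eq0 negb_or y0. Qed.

Lemma disjoint_I1_I2 : [disjoint I1 r & I2 r].
Proof.
apply/pred0P => x /=; apply/negP => /andP[x1 x2]; move/negP: (I1_neq0 x1); apply.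
move/I1_flat/flatP: x1 => f1; move/I2_flat/flatP: x2 => f2.
apply/eqP/rowP => j; rewrite mxE; case: (f1 j) => // e1.
by case: (f2 j) => e2; move: e1; rewrite e2.
Qed.

Definition weight (v : word r) : nat := #|[set p in Ipos r | v p != 0]|.

Lemma distE (v w : word r) : dist v w = weight (v - w).
Proof. by apply: eq_card => p; rewrite !inE !ffunE subr_eq0. Qed.

Lemma A2_codewordB (v w : word r) :
  A2_codeword v -> A2_codeword w -> A2_codeword (v - w).
Proof.
case=> [vV vO vE] [wV wO wE]; split; rewrite ?ffunE.
- under eq_bigr do rewrite !ffunE scalerBl.
  by rewrite sumrB vV wV subrr.
- under eq_bigr do rewrite !ffunE.
  by rewrite sumrB addrACA -opprD vO wO subrr.
- under eq_bigr do rewrite !ffunE.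
  by rewrite sumrB addrACA -opprD vE wE subrr.
Qed.

Lemma weightE (v : word r) :
  weight v = (#|[set x in I1 r | v (posV x) != 0%R]|
              + #|[set x in I2 r | v (posV x) != 0%R]|
              + (v (posO r) != 0%R) + (v (posE r) != 0%R))%N.
Proof.
rewrite /weight card_setIdE /Ipos big_setU_disjoint; last first.
  by apply/pred0P => p /=; apply/negP => /andP[/imsetP[x _ ->]]; rewrite !inE.
rewrite big_imset /=; last by move=> x y _ _ [].
rewrite big_setU_disjoint ?disjoint_I1_I2 // big_setU1 ?inE // big_set1.
by rewrite -!card_setIdE addnA.
Qed.

Lemma A2_weight_ge4 (v : word r) :
  A2_codeword v -> (exists2 x, x \in I1 r :|: I2 r & v (posV x) != 0) ->
  (4 <= weight v)%N.
Proof.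
case=> [sumV sumO sumE] [x0 x0I vx0]; pose w x := v (posV x).
have check_neq0 (c s : 'F_3) : c + s = 0 -> (c != 0) = (s != 0).
  by move/eqP; rewrite addr_eq0 => /eqP ->; rewrite oppr_eq0.
have -> : weight v = (parity_weight (I1 r) w + parity_weight (I2 r) w)%N.
  by rewrite weightE (check_neq0 _ _ sumO) (check_neq0 _ _ sumE) -addnA addnACA.
have comb_eq0 (A : {set vec r}) :
    [set x in A | w x != 0] = set0 -> \sum_(x in A) w x *: x = 0.
  move=> S0; rewrite (big_support _ (w := w) (F := fun x => w x *: x)) => [|x ->].
    by rewrite S0 big_set0.
  exact: scale0r.
have flat1 : {in I1 r, forall x, flat 1 x && (x != 0)}.
  by move=> x x1; rewrite I1_flat ?I1_neq0.
have flat2 : {in I2 r, forall x, flat 2%:R x && (x != 0)}.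
  by move=> x x2; rewrite I2_flat ?I2_neq0.
have supp_neq0 :
    ([set x in I1 r | w x != 0] != set0) || ([set x in I2 r | w x != 0] != set0).
  case/setUP: x0I => x0I; apply/orP; [left | right].
    by apply/set0Pn; exists x0; rewrite inE x0I.
  by apply/set0Pn; exists x0; rewrite inE x0I.
rewrite big_setU_disjoint ?disjoint_I1_I2 //= in sumV.
have [S1_0 | S1_neq0] := eqVneq [set x in I1 r | w x != 0] set0.
  rewrite S1_0 eqxx /= in supp_neq0; rewrite (comb_eq0 _ S1_0) add0r in sumV.
  exact: leq_trans (parity_weight_ge4 _ flat2 supp_neq0 sumV) (leq_addl _ _).
have [S2_0 | S2_neq0] := eqVneq [set x in I2 r | w x != 0] set0.
  rewrite (comb_eq0 _ S2_0) addr0 in sumV.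
  exact: leq_trans (parity_weight_ge4 (oner_neq0 _) flat1 S1_neq0 sumV) (leq_addr _ _).
exact: leq_add (parity_weight_ge2 S1_neq0) (parity_weight_ge2 S2_neq0).
Qed.

End A2Code.

Theorem theorem4p1 (r : nat) (R : {set vec r}) :
  (3 <= r)%N ->
  R \subset I1 r -> #|R| = r -> basis_of fullv (enum R) ->
  forall X' Y' : word r, A2_codeword X' -> A2_codeword Y' ->
  (exists2 x, x \in Mset R & X' (posV x) != Y' (posV x)) ->
  (4 <= dist X' Y')%N.
Proof.
move=> r_ge3 _ _ _ X' Y' X'_A2 Y'_A2 [x xM X'Y'x].
have nparam_r_gt0 := nparam_gt0 (ltnW r_ge3).
rewrite distE; apply: (A2_weight_ge4 nparam_r_gt0 (A2_codewordB X'_A2 Y'_A2)).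
by exists x; [case/setDP: xM | rewrite !ffunE subr_eq0].
Qed.
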